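(* Let $\mathcal{G}=(\mathcal{V}_x,\mathcal{E}_x)$ be a finite simple undirected graph with edge probabilities $p:\mathcal{E}_x\to[0,1]$, and let $k\ge 1$ be an integer. Let $f:2^{\mathcal{E}_x}\to\mathbb{R}_{\ge0}$ be the modular function $f(\mathcal{E})=\sum_{e\in\mathcal{E}}p(e)$. Define $g:2^{\mathcal{V}_x}\to\mathbb{R}_{\ge 0}$ by $g(\varnothing)=0$ and, for $\mathcal{V}\subseteq\mathcal{V}_x$, $$g(\mathcal{V})=\max\Big\{\textstyle\sum_{e\in\mathcal{E}}p(e)\;:\;\mathcal{E}\subseteq \mathsf{edges}(\mathcal{V}),\ |\mathcal{E}|\le k\Big\}$$ (i.e., the sum of the $k$ largest edge probabilities in $\mathsf{edges}(\mathcal{V})$, or the sum over all of $\mathsf{edges}(\mathcal{V})$ if it has at most $k$ edges). Then $g$ is normalized, monotone, and submodular.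
   Context: For $\mathcal{V}\subseteq\mathcal{V}_x$, $\mathsf{edges}(\mathcal{V})$ denotes the set of all edges of $\mathcal{G}$ incident to at least one vertex in $\mathcal{V}$. A set function $h:2^{W}\to\mathbb{R}_{\ge0}$ on a finite set $W$ is normalized if $h(\varnothing)=0$, monotone if $h(A)\le h(B)$ whenever $A\subseteq B$, and submodular if $h(A)+h(B)\ge h(A\cup B)+h(A\cap B)$ for all $A,B\subseteq W$. *)

From HB Require Import structures.
From mathcomp Require Import all_boot all_order all_algebra.
Set Implicit Arguments. Unset Strict Implicit. Unset Printing Implicit Defensive.
Import Order.TTheory GRing.Theory Num.Theory.
Local Open Scope ring_scope.

Definition simple_graph (V : finType) (E : {set {set V}}) : bool :=
  [forall e in E, #|e| == 2%N].

Definition edges (V : finType) (E : {set {set V}}) (U : {set V}) : {set {set V}} :=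
  [set e in E | [exists v in U, v \in e]].

Definition fmod (R : realFieldType) (V : finType) (p : {set V} -> R)
  (F : {set {set V}}) : R := \sum_(e in F) p e.

Definition gfun (R : realFieldType) (V : finType) (E : {set {set V}})
  (p : {set V} -> R) (k : nat) (U : {set V}) : R :=
  if U == set0 then 0 else
  \big[Num.max/0]_(F in powerset (edges E U) | (#|F| <= k)%N) fmod p F.

Definition normalized (R : realFieldType) (W : finType) (h : {set W} -> R) : Prop :=
  h set0 = 0.
Definition monotone (R : realFieldType) (W : finType) (h : {set W} -> R) : Prop :=
  forall A B : {set W}, A \subset B -> h A <= h B.
Definition submodular (R : realFieldType) (W : finType) (h : {set W} -> R) : Prop :=
  forall A B : {set W}, h A + h B >= h (A :|: B) + h (A :&: B).

From HB Require Import structures.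
From mathcomp Require Import all_boot all_order all_algebra.
From mathcomp Require Import zify lra.
Set Implicit Arguments. Unset Strict Implicit. Unset Printing Implicit Defensive.
Import Order.TTheory GRing.Theory Num.Theory.
Local Open Scope ring_scope.

(* The function g factors as g(U) = topk(edges(U)), where, for a weight w on a
   finite ground set, topk(X) is the largest total weight of at most k elements
   of X.  The theorem therefore follows from two independent facts:
   - U |-> edges(U) is monotone and turns unions into unions, while
     edges(A :&: B) is contained in edges(A) :&: edges(B);
   - topk is normalized, monotone and submodular, for ANY real weights.  Given feasible sets S for
   X :|: Y and T for X :&: Y, an exchange argument redistributes the elements of
   S and T into feasible sets S1 for X and S2 for Y with the same union and
   intersection as S and T; since the total weight is modular this gives
   w(S) + w(T) = w(S1) + w(S2) <= topk X + topk Y, and taking the maximum over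
   S and T yields topk (X :|: Y) + topk (X :&: Y) <= topk X + topk Y. *)

Lemma subset_of_card (W : finType) (A : {set W}) (n : nat) :
  (n <= #|A|)%N -> exists2 B : {set W}, B \subset A & #|B| = n.
Proof.
case/card_geqP=> s [uniq_s size_s sub_s]; exists [set x in s].
  by apply/subsetP=> x; rewrite inE; apply: sub_s.
by rewrite cardsE (card_uniqP uniq_s).
Qed.

Section TopK.
Variables (R : realFieldType) (W : finType) (w : W -> R) (k : nat).
Implicit Types A B F S T X Y : {set W}.

Definition wsum A : R := \sum_(x in A) w x.

Lemma wsum0 : wsum set0 = 0.
Proof. by rewrite /wsum big_set0. Qed.

Lemma wsumUI A B : wsum (A :|: B) + wsum (A :&: B) = wsum A + wsum B.
Proof.
rewrite /wsum (big_setID (A := A :|: B) A) setUK setDUl setDv set0U.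
by rewrite [in RHS](big_setID (A := B) A) setIC /= addrAC addrA.
Qed.

(* Largest total weight of at most k elements of X (0 if all weights are
   negative, since the empty set is admissible). *)
Definition topk X : R :=
  \big[Num.max/0]_(F in powerset X | (#|F| <= k)%N) wsum F.

Lemma topk_ub X F : F \subset X -> (#|F| <= k)%N -> wsum F <= topk X.
Proof. by move=> sFX cF; apply: le_bigmax_cond; rewrite powersetE sFX. Qed.

Lemma topk_lub X (c : R) : 0 <= c ->
  (forall F, F \subset X -> (#|F| <= k)%N -> wsum F <= c) -> topk X <= c.
Proof.
by move=> c_ge0 ub; apply: bigmax_le => // F; rewrite powersetE => /andP[]; apply: ub.
Qed.

Lemma topk_ge0 X : 0 <= topk X.
Proof. by rewrite -wsum0; apply: topk_ub; rewrite ?sub0set ?cards0. Qed.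

Lemma topk0 : topk set0 = 0.
Proof.
apply/eqP; rewrite eq_le topk_ge0 andbT; apply: topk_lub => // F.
by rewrite subset0 => /eqP -> _; rewrite wsum0.
Qed.

Lemma topk_mono X Y : X \subset Y -> topk X <= topk Y.
Proof.
move=> sXY; apply: topk_lub => [|F sFX cF]; first exact: topk_ge0.
by apply: topk_ub => //; apply: subset_trans sXY.
Qed.

(* Put
   S :&: X into S1 and fill S1 up to k with elements of T :\: S; the rest of
   S and T goes into S2. *)
Lemma exchange_sets X Y S T :
  S \subset X :|: Y -> T \subset X :&: Y -> (#|S| <= k)%N -> (#|T| <= k)%N ->
  exists S1, exists S2,
    [/\ S1 \subset X, S2 \subset Y, (#|S1| <= k)%N, (#|S2| <= k)%N &
        S1 :|: S2 = S :|: T /\ S1 :&: S2 = S :&: T].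
Proof.
move=> sSXY sTXY cS cT.
have sTX : T \subset X := subset_trans sTXY (subsetIl X Y).
have sTY : T \subset Y := subset_trans sTXY (subsetIr X Y).
set a := #|S :&: X|.
have [R1 sR1 cR1] := subset_of_card (geq_minl #|T :\: S| (k - a)).
pose S1 := (S :&: X) :|: R1.
pose S2 := (S :\: X) :|: (S :&: T) :|: (T :\: S :\: R1).
(* Pointwise, the identities below are boolean tautologies once we know
   R1 \subset T :\: S and T \subset X. *)
have memR1 x : x \in R1 -> (x \notin S) && (x \in T).
  by move/(subsetP sR1); rewrite inE.
have memT x : x \in T -> x \in X := subsetP sTX x.
have eqU : S1 :|: S2 = S :|: T.
  apply/setP=> x; move: (memR1 x) (memT x) => /implyP + /implyP; rewrite !inE.
  by case: (x \in R1); case: (x \in S); case: (x \in T); case: (x \in X) => //=.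
have eqI : S1 :&: S2 = S :&: T.
  apply/setP=> x; move: (memR1 x) (memT x) => /implyP + /implyP; rewrite !inE.
  by case: (x \in R1); case: (x \in S); case: (x \in T); case: (x \in X) => //=.
have disjS1 : (S :&: X) :&: R1 = set0.
  apply/setP=> x; move: (memR1 x) => /implyP; rewrite !inE.
  by case: (x \in R1); case: (x \in S) => //=; rewrite andbF.
have cS1 : #|S1| = (a + minn #|T :\: S| (k - a))%N.
  by rewrite cardsU disjS1 cards0 subn0 cR1.
(* Counting: #|S1| = a + min(#|T :\: S|, k - a) <= k, and #|S2| equals
   #|S| + #|T| - #|S1|, which is <= k in either case of the minimum. *)
have cS1S2 : (#|S1| + #|S2| = #|S| + #|T|)%N by rewrite -cardsUI eqU eqI cardsUI.
have cTS := cardsID S T.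
have aS : (a <= #|S|)%N by apply/subset_leq_card/subsetIl.
have STa : (#|T :&: S| <= a)%N.
  by apply/subset_leq_card; rewrite setIC setIS.
have sS1X : S1 \subset X.
  by rewrite subUset subsetIr (subset_trans sR1) // (subset_trans (subsetDl T S)).
have sS2Y : S2 \subset Y.
  have sSDX : S :\: X \subset Y.
    apply/subsetP=> x; rewrite inE => /andP[xNX xS].
    by move: (subsetP sSXY x xS); rewrite inE (negbTE xNX).
  have sRY : T :\: S :\: R1 \subset Y.
    exact: subset_trans (subsetDl _ R1) (subset_trans (subsetDl T S) sTY).
  by rewrite !subUset sSDX sRY (subset_trans (subsetIr S T)).
by exists S1, S2; split=> //; lia.
Qed.

Lemma topk_exchange X Y S T :
  S \subset X :|: Y -> T \subset X :&: Y -> (#|S| <= k)%N -> (#|T| <= k)%N ->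
  wsum S + wsum T <= topk X + topk Y.
Proof.
move=> sSXY sTXY cS cT.
have [S1 [S2 [sS1X sS2Y cS1 cS2 [eqU eqI]]]] := exchange_sets sSXY sTXY cS cT.
by rewrite -wsumUI -eqU -eqI wsumUI lerD ?topk_ub.
Qed.

Lemma topk_submodular X Y : topk (X :|: Y) + topk (X :&: Y) <= topk X + topk Y.
Proof.
have topkIX : topk (X :&: Y) <= topk X by apply/topk_mono/subsetIl.
have topkY := topk_ge0 Y.
rewrite -lerBrDr; apply: topk_lub => [|S sS cS]; first lra.
rewrite lerBrDr addrC -lerBrDr; apply: topk_lub => [|T sT cT].
  by rewrite lerBrDr add0r -[wsum S]addr0 -wsum0 topk_exchange ?sub0set ?cards0.
by rewrite lerBrDr addrC topk_exchange.
Qed.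

End TopK.

Section Edges.
Variables (V : finType) (E : {set {set V}}).

Lemma edges0 : edges E set0 = set0.
Proof. by apply/setP=> e; rewrite !inE; apply/andP=> -[_ /existsP[v]]; rewrite inE. Qed.

Lemma edges_subset (A B : {set V}) : A \subset B -> edges E A \subset edges E B.
Proof.
move=> sAB; apply/subsetP=> e; rewrite !inE => /andP[-> /existsP[v /andP[vA ve]]].
by apply/existsP; exists v; rewrite (subsetP sAB v vA).
Qed.

Lemma edgesU (A B : {set V}) : edges E (A :|: B) = edges E A :|: edges E B.
Proof.
apply/setP=> e; rewrite !inE -andb_orr; congr (_ && _).
apply/existsP/orP=> [[v /andP[]]|[]/existsP[v /andP[vA ve]]].
- by rewrite inE => /orP[] vA ve; [left|right]; apply/existsP; exists v; rewrite vA.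
- by exists v; rewrite inE vA.
- by exists v; rewrite inE vA orbT.
Qed.

Lemma gfun_topk (R : realFieldType) (p : {set V} -> R) (k : nat) (U : {set V}) :
  gfun E p k U = topk p k (edges E U).
Proof. by rewrite /gfun; case: eqP => [->|//]; rewrite edges0 topk0. Qed.

End Edges.

Theorem theorem1 (R : realFieldType) (V : finType) (E : {set {set V}})
  (p : {set V} -> R) (k : nat) :
  simple_graph E ->
  (forall e, e \in E -> 0 <= p e <= 1) ->
  (1 <= k)%N ->
  [/\ normalized (gfun E p k), monotone (gfun E p k) & submodular (gfun E p k)].
Proof.
move=> _ _ _; split.
- by rewrite /normalized /gfun eqxx.
- by move=> A B sAB; rewrite !gfun_topk topk_mono ?edges_subset.
- move=> A B; rewrite !gfun_topk edgesU.
  apply: le_trans (topk_submodular p k (edges E A) (edges E B)); rewrite lerD2l.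
  by rewrite topk_mono // subsetI !edges_subset ?subsetIl ?subsetIr.
Qed.
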